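(* Let $k\geq 2$ be an integer, $n=rk$ with $r>2$ an integer, and $e=\lceil r/2\rceil-1$. Let $V_i=\{u+\eta_i u^q\gamma^{l_i}\mid u\in\mathbb{F}_{q^k}\}$, $i=1,\dots,e(q-1)$, where $\eta_i\in G$ and $1\le l_i\le e$. Then the code $\mathcal{C}=\bigcup_{i=1}^{e(q-1)}\{\alpha V_i\mid \alpha\in\mathbb{F}_{q^n}^*\}$ is a cyclic constant dimension subspace code with cardinality $e(q^n-1)$ and minimum distance $2k-2$.
   Context: $q$ is a prime power, $\mathbb{F}_{q^n}$ is the extension of degree $n$ of $\mathbb{F}_q$. The subspace distance is $d(U,V)=\dim U+\dim V-2\dim(U\cap V)$; a code is cyclic if it is a union of orbits $\{\alpha U\mid\alpha\in\mathbb{F}_{q^n}^*\}$. Let $\xi$ be a primitive element of $\mathbb{F}_{q^k}$ and $G=\mathbb{F}_{q^k}^*/\langle\xi^{q-1}\rangle$, a cyclic group of order $q-1$ (elements of $G$ used via fixed coset representatives in $\mathbb{F}_{q^k}^*$). Let $\gamma$ be a root of an irreducible polynomial of degree $r$ over $\mathbb{F}_{q^k}$. The $V_i$ are indexed by the $e(q-1)$ distinct pairs $(\eta_i,l_i)\in G\times\{1,\dots,e\}$. *)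

From HB Require Import structures.
From mathcomp Require Import all_boot all_order all_algebra all_field.
Set Implicit Arguments. Unset Strict Implicit. Unset Printing Implicit Defensive.
Import GRing.Theory.
Local Open Scope ring_scope.

Definition subspace_dist (F0 : fieldType) (L : fieldExtType F0) (U V : {vspace L}) : nat :=
  (\dim U + \dim V - 2 * \dim (U :&: V))%N.

Definition scalev (F0 : fieldType) (L : fieldExtType F0) (a : L) (V : {vspace L}) : {vspace L} :=
  (amull a @: V)%VS.

Definition irreducible_over (F0 : fieldType) (L : fieldExtType F0) (K : {subfield L}) (p : {poly L}) : Prop :=
  [/\ p \is a polyOver K, (1 < size p)%N &
      forall d : {poly L}, d \is a polyOver K -> d %| p -> size d = 1%N \/ (d %= p)].

(* V = { u + eta u^q gamma^l | u in K }, written as the F0-span of the image of a basis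
   (the map is F_q-linear; the main theorem also states the set equality). *)
Definition Vsp (F0 : fieldType) (L : fieldExtType F0) (K : {subfield L}) (q : nat)
  (eta gamma : L) (l : nat) : {vspace L} :=
  <<[seq (u + eta * u ^+ q * gamma ^+ l)%R | u <- vbasis K]>>%VS.

From HB Require Import structures.
From mathcomp Require Import all_boot all_order all_algebra all_field.
From mathcomp Require Import ring zify.
Set Implicit Arguments. Unset Strict Implicit. Unset Printing Implicit Defensive.
Import GRing.Theory.
Local Open Scope ring_scope.

(* The map u |-> u + eta u^q gamma^l is F_q-linear and injective on K, so every
   alpha V is a k-dimensional F_q-subspace.  If alpha1 V1 and alpha2 V2 share
   two F_q-independent vectors, writing both in each codeword and cross-
   multiplying gives a K-linear relation between 1, gamma^l1, gamma^l2 and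
   gamma^(l1+l2).  Since l1 + l2 < r = [K(gamma) : K], all coefficients
   vanish, which forces l1 = l2, eta1 / eta2 to be a (q-1)-th power in K, and,
   when eta1 = eta2, alpha1 / alpha2 to lie in F_q.  The choice of the eta's
   then makes distinct codewords meet in dimension at most 1, and each orbit
   has (q^n - 1)/(q - 1) elements; two codewords of one orbit meeting in a
   line show that the bound 2k - 2 is attained. *)

Section FrobeniusTwist.
Variables (F0 : finFieldType) (L : fieldExtType F0).
Local Notation q := #|F0|.

Lemma mem1v_frob (x : L) : (x \in 1%VS) = (x ^+ q == x).
Proof. by have := Fermat's_little_theorem (1%AS : {subfield L}) x; rewrite dimv1 expn1. Qed.

Lemma frobD (x y : L) : (x + y) ^+ q = x ^+ q + y ^+ q.
Proof.
apply: exprDn_pchar; have [p p_pr pF] := finPcharP F0.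
have pL : p \in [pchar L] by rewrite (pchar_lalg L).
by rewrite (card_pprimeChar pF) pnatX (eq_pnat _ (pcharf_eq pL)) (pnat_id p_pr).
Qed.

Lemma frobZ (c : F0) (x : L) : (c *: x) ^+ q = c *: x ^+ q.
Proof. by rewrite -mulr_algl exprMn -[in LHS]in_algE -rmorphXn expf_card mulr_algl. Qed.

Lemma frob_ratio_eq (a b u v : L) : u != 0 -> v != 0 ->
  a * u ^+ q * v = b * v ^+ q * u -> a = b * (v / u) ^+ q.-1.
Proof.
move=> u_neq0 v_neq0 E; have vu_neq0 : v / u != 0 by rewrite mulf_neq0 ?invr_eq0.
have q_gt0 : (0 < q)%N by rewrite ltnW // finNzRing_gt1.
apply: (mulIf vu_neq0); rewrite -mulrA -exprSr prednK // expr_div_n.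
apply: (mulIf (mulf_neq0 (expf_neq0 q u_neq0) u_neq0)).
transitivity (a * u ^+ q * v); first by field.
by rewrite E; field; rewrite expf_neq0.
Qed.

Definition twist (eta gamma : L) (l : nat) (u : L) : L := u + eta * u ^+ q * gamma ^+ l.

Lemma twist_is_linear eta gamma l : linear (twist eta gamma l).
Proof.
move=> c x y; rewrite /twist frobD frobZ mulrDr mulrDl -scalerAr -scalerAl scalerDr.
by rewrite addrACA.
Qed.

HB.instance Definition _ eta gamma l := GRing.isSemilinear.Build F0 L L _ (twist eta gamma l)
  (GRing.semilinear_linear (twist_is_linear eta gamma l)).

Lemma twist0 eta gamma l : twist eta gamma l 0 = 0.
Proof. exact: raddf0. Qed.

Lemma twist_mul1v eta gamma l (c u : L) :
  c \in 1%VS -> twist eta gamma l (c * u) = c * twist eta gamma l u.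
Proof. by rewrite mem1v_frob /twist exprMn => /eqP->; ring. Qed.

Lemma Vsp_twist (K : {subfield L}) eta gamma l :
  Vsp K q eta gamma l = (linfun (twist eta gamma l) @: K)%VS.
Proof.
rewrite -[in RHS](span_basis (vbasisP K)) limg_span /Vsp.
by congr span; apply: eq_map => u; rewrite lfunE.
Qed.

Lemma mem_Vsp (K : {subfield L}) eta gamma l x :
  reflect (exists2 u, u \in K & x = twist eta gamma l u) (x \in Vsp K q eta gamma l).
Proof.
by rewrite Vsp_twist; apply: (iffP memv_imgP) => -[u Ku ->]; exists u; rewrite ?lfunE.
Qed.

End FrobeniusTwist.

Section Scalev.
Variables (F : fieldType) (L : fieldExtType F).
Implicit Types (a b c x : L) (W : {vspace L}).

Lemma mem_scalev a W x : reflect (exists2 w, w \in W & x = a * w) (x \in scalev a W).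
Proof. by apply: (iffP memv_imgP) => -[w Ww ->]; exists w; rewrite ?lfunE. Qed.

Lemma scalevM a b W : scalev a (scalev b W) = scalev (a * b) W.
Proof.
rewrite /scalev -limg_comp; congr lfun_img.
by apply/lfunP => x; rewrite comp_lfunE !lfunE /= mulrA.
Qed.

Lemma dim_scalev a W : a != 0 -> \dim (scalev a W) = \dim W.
Proof. by move=> a0; rewrite limg_dim_eq // (eqP (lker0_amull _)) ?capv0 ?unitfE. Qed.

Lemma memv_mul1v c w W : c \in 1%VS -> w \in W -> c * w \in W.
Proof. by case/vlineP=> a ->; rewrite mulr_algl; apply: memvZ. Qed.

Lemma scalev_id1 c W : c \in 1%VS -> c != 0 -> scalev c W = W.
Proof.
move=> c1 c0; apply/eqP; rewrite eqEdim dim_scalev // leqnn andbT.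
by apply/subvP => _ /mem_scalev[w Ww ->]; apply: memv_mul1v.
Qed.

Lemma dimv_notin_subv (U W : {vspace L}) :
  (\dim W < \dim U)%N -> exists2 u, u \in U & u \notin W.
Proof. by move=> ltWU; apply/subvPn; apply: contraTN ltWU => /dimvS; rewrite -leqNgt. Qed.

End Scalev.

Section SubspaceDistance.
Variables (F : fieldType) (L : fieldExtType F) (k : nat) (W1 W2 : {vspace L}).
Hypotheses (dimW1 : \dim W1 = k) (dimW2 : \dim W2 = k).

Lemma subspace_dist_ge : (\dim (W1 :&: W2) <= 1)%N -> (2 * k - 2 <= subspace_dist W1 W2)%N.
Proof. by rewrite /subspace_dist dimW1 dimW2; lia. Qed.

Lemma subspace_dist_cap1 : \dim (W1 :&: W2) = 1%N -> subspace_dist W1 W2 = (2 * k - 2)%N.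
Proof. by rewrite /subspace_dist dimW1 dimW2 => ->; lia. Qed.

End SubspaceDistance.

Lemma adjoin_degree_irreducible (F : fieldType) (L : fieldExtType F) (K : {subfield L})
    (p : {poly L}) (gamma : L) :
  irreducible_over K p -> root p gamma -> adjoin_degree K gamma = (size p).-1.
Proof.
case=> Kp _ irr_p p_gamma.
have [|/eqp_size] := irr_p _ (minPolyOver K gamma) (minPoly_dvdp Kp p_gamma).
  by rewrite size_minPoly.
by rewrite size_minPoly => <-.
Qed.

Section AdjoinPowers.
Variables (F : fieldType) (L : fieldExtType F) (K : {subfield L}) (gamma : L) (r : nat).
Hypothesis deg_gamma : adjoin_degree K gamma = r.

Lemma adjoin_powers_coef_eq0 (s : seq (L * nat)) n :
  all (fun m => (m.1 \in K) && (m.2 < r)%N) s ->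
  \sum_(m <- s) m.1 * gamma ^+ m.2 = 0 -> \sum_(m <- s) m.1 *+ (m.2 == n) = 0.
Proof.
move=> /allP Ks sum0; pose P := \sum_(m <- s) m.1 *: 'X^(m.2).
have PK : P \is a polyOver K.
  by rewrite /P big_seq rpred_sum // => m /Ks/andP[Km _]; rewrite polyOverZ ?rpredX ?polyOverX.
have szP : (size P <= r)%N.
  rewrite /P big_seq; apply: (big_ind (fun p : {poly L} => size p <= r)%N).
  - by rewrite size_poly0.
  - by move=> p1 p2 le1 le2; rewrite (leq_trans (size_polyD _ _)) // geq_max le1.
  by move=> m /Ks/andP[_ ltmr]; rewrite (leq_trans (size_scale_leq _ _)) // size_polyXn.
have : root P gamma.
  by apply/rootP; rewrite /P horner_sum -[RHS]sum0; under eq_bigr do rewrite hornerZ hornerXn.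
rewrite (root_small_adjoin_poly PK) ?deg_gamma // => /eqP P0.
rewrite -[RHS](coef0 L n) -P0 coef_sum; apply: eq_bigr => m _.
by rewrite coefZ coefXn mulr_natr eq_sym.
Qed.

End AdjoinPowers.

Section TwistSpaces.
Variables (F0 : finFieldType) (L : fieldExtType F0) (K : {subfield L}) (gamma : L) (r : nat).
Hypothesis deg_gamma : adjoin_degree K gamma = r.
Local Notation q := #|F0|.

Lemma twist_eq0 eta l u : eta \in K -> u \in K -> (0 < l < r)%N ->
  twist eta gamma l u = 0 -> u = 0.
Proof.
move=> Keta Ku /andP[l_gt0 ltlr] tw0.
have := adjoin_powers_coef_eq0 deg_gamma (s := [:: (u, 0%N); (eta * u ^+ q, l)]) 0.
rewrite /= Ku rpredM ?rpredX // ltlr (leq_ltn_trans _ ltlr) //.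
rewrite !big_cons !big_nil /= expr0 mulr1 !addr0 (gtn_eqF l_gt0) => /(_ isT tw0).
by rewrite mulr0n addr0 mulr1n.
Qed.

Lemma dim_Vsp eta l : eta \in K -> (0 < l < r)%N -> \dim (Vsp K q eta gamma l) = \dim K.
Proof.
move=> Keta lr; rewrite Vsp_twist limg_dim_eq //; apply/eqP; rewrite -subv0.
apply/subvP => u; rewrite memv_cap memv_ker lfunE memv0 => /andP[Ku /eqP tw0].
by rewrite (twist_eq0 Keta Ku lr tw0).
Qed.

Variables (eta1 eta2 : L) (l1 l2 : nat).
Hypotheses (Keta1 : eta1 \in K) (Keta2 : eta2 \in K) (eta1_neq0 : eta1 != 0).
Hypotheses (l1_gt0 : (0 < l1)%N) (l2_gt0 : (0 < l2)%N) (ltl12r : (l1 + l2 < r)%N).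

Lemma twist_cross_eq u1 u2 v1 v2 : u1 \in K -> u2 \in K -> v1 \in K -> v2 \in K ->
    u2 != 0 -> v2 != 0 ->
  twist eta2 gamma l2 v1 * twist eta1 gamma l1 u2 =
    twist eta2 gamma l2 v2 * twist eta1 gamma l1 u1 ->
  (v1 / v2) ^+ q = v1 / v2 \/ l1 = l2 /\ eta1 * u2 ^+ q * v2 = eta2 * v2 ^+ q * u2.
Proof.
move=> Ku1 Ku2 Kv1 Kv2 u2_neq0 v2_neq0 cross.
(* The cross relation is a K-combination of 1, gamma^l1, gamma^l2 and gamma^(l1+l2). *)
set A := v1 * u2 - v2 * u1.
set B := eta1 * (u2 ^+ q * v1 - u1 ^+ q * v2).
set C := eta2 * (v1 ^+ q * u2 - v2 ^+ q * u1).
set D := eta1 * eta2 * (u2 ^+ q * v1 ^+ q - u1 ^+ q * v2 ^+ q).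
have coef_rel n :
    A *+ (0 == n)%N + (B *+ (l1 == n) + (C *+ (l2 == n) + (D *+ (l1 + l2 == n) + 0))) = 0.
  pose s := [:: (A, 0%N); (B, l1); (C, l2); (D, (l1 + l2)%N)].
  have := adjoin_powers_coef_eq0 deg_gamma (s := s) n.
  rewrite !big_cons !big_nil /= !(rpredB, rpredM, rpredX) //=.
  apply; first by apply/and4P; split; lia.
  rewrite -[RHS](subrr (twist eta2 gamma l2 v2 * twist eta1 gamma l1 u1)) -{1}cross.
  by rewrite /twist /A /B /C /D exprD expr0; ring.
have A0 : A = 0.
  by have := coef_rel 0%N; rewrite eqxx !eqn0Ngt addn_gt0 l1_gt0 l2_gt0 /= !mulr0n !addr0 mulr1n.
have BC0 : B + C *+ (l2 == l1) = 0.
  have := coef_rel l1; have -> : (0 == l1)%N = false by lia.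
  have -> : (l1 + l2 == l1)%N = false by lia.
  by rewrite eqxx mulr0n mulr1n add0r !addr0.
set t := v1 / v2; have v1E : v1 = t * v2 by rewrite divfK.
clearbody t; have u1E : u1 = t * u2.
  apply: (mulIf v2_neq0); move/eqP: A0; rewrite subr_eq0 v1E => /eqP E.
  by rewrite mulrC -E mulrAC.
have : (t - t ^+ q) * (eta1 * u2 ^+ q * v2 - (eta2 * v2 ^+ q * u2) *+ (l2 == l1)) = 0.
  by rewrite -BC0 /B /C u1E v1E !exprMn; case: (l2 == l1); ring.
move/eqP; rewrite mulf_eq0 subr_eq0 => /orP[/eqP tE | E]; first by left.
right; case: (l2 =P l1) E => [-> | _]; first by rewrite mulr1n subr_eq0 => /eqP.
rewrite mulr0n subr0 !mulf_eq0 (negbTE eta1_neq0) expf_eq0 (negbTE u2_neq0).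
by rewrite (negbTE v2_neq0) andbF.
Qed.

Lemma dim_cap_scalev_Vsp_gt1 a1 a2 : a1 != 0 -> a2 != 0 ->
  (1 < \dim (scalev a1 (Vsp K q eta1 gamma l1) :&: scalev a2 (Vsp K q eta2 gamma l2)))%N ->
  [/\ l1 = l2, exists2 w, (w \in K) && (w != 0) & eta1 = eta2 * w ^+ q.-1
    & eta1 = eta2 -> a1 / a2 \in 1%VS].
Proof.
move=> a1_neq0 a2_neq0 dimI; set I := (_ :&: _)%VS in dimI.
set y2 := vpick I; have y2_neq0 : y2 != 0 by rewrite vpick0 -dimv_eq0 -lt0n ltnW.
have [y1 y1I y1_notin] : exists2 y1, y1 \in I & y1 \notin <[y2]>%VS.
  by apply: dimv_notin_subv; rewrite dim_vline y2_neq0.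
move: y1I (memv_pick I); rewrite -/y2 !memv_cap.
case/andP=> /mem_scalev[_ /mem_Vsp[u1 Ku1 ->] y1E1] /mem_scalev[_ /mem_Vsp[v1 Kv1 ->] y1E2].
case/andP=> /mem_scalev[_ /mem_Vsp[u2 Ku2 ->] y2E1] /mem_scalev[_ /mem_Vsp[v2 Kv2 ->] y2E2].
have tw1u2_neq0 : twist eta1 gamma l1 u2 != 0.
  by apply: contraNneq y2_neq0; rewrite y2E1 => ->; rewrite mulr0.
have u2_neq0 : u2 != 0 by apply: contraNneq tw1u2_neq0 => ->; rewrite twist0.
have v2_neq0 : v2 != 0.
  by apply: contraNneq y2_neq0; rewrite y2E2 => ->; rewrite twist0 mulr0.
have cross : twist eta2 gamma l2 v1 * twist eta1 gamma l1 u2 =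
             twist eta2 gamma l2 v2 * twist eta1 gamma l1 u1.
  apply: (mulfI (mulf_neq0 a1_neq0 a2_neq0)); transitivity (y1 * y2).
    by rewrite y1E2 y2E1; ring.
  by rewrite y1E1 y2E2; ring.
(* v1 / v2 in F_q would put y1 on the F_q-line of y2. *)
have [tE | [l12 E]] := twist_cross_eq Ku1 Ku2 Kv1 Kv2 u2_neq0 v2_neq0 cross.
  case/negP: y1_notin; rewrite y1E2 -(divfK v2_neq0 v1) twist_mul1v ?mem1v_frob ?tE //.
  by rewrite mulrCA -y2E2 memv_mul1v ?memv_line // mem1v_frob tE.
subst l2; set w := v2 / u2; have v2E : v2 = w * u2 by rewrite divfK.
have etaE : eta1 = eta2 * w ^+ q.-1 := frob_ratio_eq u2_neq0 v2_neq0 E.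
split=> [//||eta12].
  by exists w; rewrite // rpredM ?rpredV ?mulf_neq0 ?invr_eq0.
have wq1 : w ^+ q.-1 = 1 by apply: (mulfI eta1_neq0); rewrite mulr1 {2}etaE eta12.
have w1 : w \in 1%VS.
  by rewrite mem1v_frob -(prednK (ltnW (finNzRing_gt1 F0))) exprS wq1 mulr1.
suff -> : a1 / a2 = w by [].
apply: (canLR (mulfK a2_neq0)); apply: (mulIf tw1u2_neq0).
by rewrite -y2E1 y2E2 v2E eta12 twist_mul1v // mulrA [a2 * w]mulrC.
Qed.

End TwistSpaces.

Section FiniteCounting.
Variables (F0 : finFieldType) (L : fieldExtType F0).
Local Notation q := #|F0|.
Local Notation T := (finvect_type L).

Lemma card_vspace_nonzero (U : {vspace L}) :
  #|[set x : T | (x \in U) && (x != 0)]| = (q ^ \dim U - 1)%N.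
Proof.
rewrite -(card_vspace (U : {vspace T})) [in RHS](cardD1 0) (mem0v (U : {vspace T})).
rewrite add1n subn1 /=.
by apply: eq_card => x; rewrite !inE andbC.
Qed.

Lemma subfield_unit_exp (K : {subfield L}) (w : L) : w \in K -> w != 0 ->
  w ^+ (q ^ \dim K - 1) = 1.
Proof.
rewrite (Fermat's_little_theorem K) => /eqP wE w_neq0; apply: (mulIf w_neq0).
by rewrite mul1r -exprSr subn1 prednK ?expn_gt0 ?(ltnW (finNzRing_gt1 F0)).
Qed.

End FiniteCounting.

Lemma card_imset_uniform_fibres (aT rT : finType) (f : aT -> rT) (A : {set aT}) m :
  (forall x, x \in A -> #|[set y in A | f y == f x]| = m) -> #|A| = (#|f @: A| * m)%N.
Proof.
move=> fibres; rewrite -sum1_card (partition_big_imset f) /= -sum_nat_const.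
apply: eq_bigr => _ /imsetP[x Ax ->]; rewrite -(fibres x Ax) -sum1_card.
by apply: eq_bigl => y; rewrite inE.
Qed.

(* The subtype structure of {vspace vT} over matrices lives in VectorInternalTheory. *)
Module VspaceFinite.
Import VectorInternalTheory.
HB.instance Definition _ (F : finFieldType) (vT : vectType F) := [Finite of {vspace vT} by <:].
End VspaceFinite.
Import VspaceFinite.

Lemma code_exponents_lt (r : nat) (l l' : 'I_((r + 1) %/ 2).-1) : (l.+1 + l'.+1 < r)%N.
Proof. by have := ltn_ord l; have := ltn_ord l'; lia. Qed.

Lemma code_exponent_lt (r : nat) (l : 'I_((r + 1) %/ 2).-1) : (0 < l.+1 < r)%N.
Proof. by have := code_exponents_lt l l; lia. Qed.

Section CyclicCode.
Variables (F0 : finFieldType) (L : fieldExtType F0) (k r : nat).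
Variables (K : {subfield L}) (xi gamma : L) (eta : 'I_#|F0|.-1 -> L).
Local Notation q := #|F0|.
Local Notation e := ((r + 1) %/ 2).-1.
Hypothesis k_gt1 : (1 < k)%N.
Hypothesis dimK : \dim K = k.
Hypothesis xi_prim : (q ^ k - 1).-primitive_root xi.
Hypothesis deg_gamma : adjoin_degree K gamma = r.
Hypothesis eta_unit : forall j, eta j \in K /\ eta j != 0.
Hypothesis eta_cosets : forall j j', j != j' -> forall m, eta j != eta j' * xi ^+ (q.-1 * m).

Definition codeV (j : 'I_q.-1) (l : 'I_e) := Vsp K q (eta j) gamma l.+1.

Definition in_code (W : {vspace L}) := exists j l a, a != 0 /\ W = scalev a (codeV j l).

Lemma dim_codeV j l : \dim (codeV j l) = k.
Proof. by rewrite (dim_Vsp deg_gamma) ?code_exponent_lt //; case: (eta_unit j). Qed.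

Lemma dim_in_code W : in_code W -> \dim W = k.
Proof. by case=> j [l [a [a_neq0 ->]]]; rewrite dim_scalev ?dim_codeV. Qed.

Lemma in_code_scalev W a : in_code W -> a != 0 -> in_code (scalev a W).
Proof.
case=> j [l [b [b_neq0 ->]]] a_neq0; exists j, l, (a * b).
by rewrite mulf_neq0 // scalevM.
Qed.

Lemma codeV_cap_gt1 j1 j2 l1 l2 a1 a2 : a1 != 0 -> a2 != 0 ->
  (1 < \dim (scalev a1 (codeV j1 l1) :&: scalev a2 (codeV j2 l2)))%N ->
  [/\ j1 = j2, l1 = l2 & a1 / a2 \in 1%VS].
Proof.
move=> a1_neq0 a2_neq0 dimI; have [Keta1 eta1_neq0] := eta_unit j1.
have [Keta2 _] := eta_unit j2.
have [l12 [w /andP[Kw w_neq0] etaE] a12] := dim_cap_scalev_Vsp_gt1 deg_gamma Keta1 Keta2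
  eta1_neq0 (ltn0Sn l1) (ltn0Sn l2) (code_exponents_lt l1 l2) a1_neq0 a2_neq0 dimI.
have w_unity : w ^+ (q ^ k - 1) = 1 by rewrite -dimK subfield_unit_exp.
have [m wE] := prim_rootP xi_prim w_unity.
have j12 : j1 = j2.
  apply/eqP; apply: contraT => /eta_cosets/(_ m); rewrite etaE wE -exprM mulnC.
  by rewrite eqxx.
by split=> //; [apply: val_inj; case: l12 | apply: a12; rewrite j12].
Qed.

Lemma dim_code_cap W1 W2 : in_code W1 -> in_code W2 -> W1 != W2 -> (\dim (W1 :&: W2) <= 1)%N.
Proof.
case=> j1 [l1 [a1 [a1_neq0 ->]]] [j2 [l2 [a2 [a2_neq0 ->]]]].
apply: contraNT; rewrite -ltnNge => /(codeV_cap_gt1 a1_neq0 a2_neq0)[<- <- a12].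
have c_neq0 : a1 / a2 != 0 by rewrite mulf_neq0 ?invr_eq0.
by rewrite -(divfK a2_neq0 a1) -scalevM scalev_id1.
Qed.

Local Notation T := (finvect_type L).

Definition code_params : {set 'I_q.-1 * 'I_e * T} := [set x | x.2 != 0].

Definition code_of (x : 'I_q.-1 * 'I_e * T) := scalev x.2 (codeV x.1.1 x.1.2).

Definition code : {set {vspace L}} := code_of @: code_params.

Lemma in_codeP W : in_code W <-> W \in code.
Proof.
split=> [[j [l [a [a_neq0 ->]]]] | /imsetP[[[j l] a] a_neq0 ->]].
  by apply/imsetP; exists (j, l, a : T); rewrite ?inE.
by exists j, l, a; move: a_neq0; rewrite inE.
Qed.

Lemma code_of_fibre x : x \in code_params ->
  [set y in code_params | code_of y == code_of x] =
  [set (x.1, c * x.2) | c in [set c : T | (c \in 1%VS) && (c != 0)]].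
Proof.
case: x => [[j l] a]; rewrite inE /= => a_neq0.
apply/setP => -[[j' l'] a']; rewrite !inE /=; apply/andP/imsetP => [[a'_neq0 /eqP Ea] | ].
  have dimI : (1 < \dim (code_of (j', l', a') :&: code_of (j, l, a)))%N.
    by rewrite Ea capvv dim_scalev // dim_codeV.
  have [/= -> /= -> a'a] := codeV_cap_gt1 a'_neq0 a_neq0 dimI.
  exists (a' / a : T); first by rewrite inE a'a mulf_neq0 ?invr_eq0.
  by rewrite divfK.
case=> c; rewrite inE => /andP[c1 c_neq0] [-> -> ->].
by rewrite mulf_neq0 //= /code_of -scalevM scalev_id1.
Qed.

Lemma card_code : \dim (fullv : {vspace L}) = (r * k)%N -> #|code| = (e * (q ^ (r * k) - 1))%N.
Proof.
move=> dimL; have q1_gt0 : (0 < q.-1)%N by rewrite -subn1 subn_gt0 finNzRing_gt1.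
have card_fibres x :
    x \in code_params -> #|[set y in code_params | code_of y == code_of x]| = q.-1.
  move=> x_param; have x2_neq0 : x.2 != 0 by rewrite inE in x_param.
  rewrite code_of_fibre // card_imset ?card_vspace_nonzero ?dimv1 ?subn1 //.
  by move=> c c' [] /(mulIf x2_neq0).
have card_params : #|code_params| = (q.-1 * e * (q ^ (r * k) - 1))%N.
  have -> : code_params = setX [set: 'I_q.-1 * 'I_e] [set c : T | (c \in fullv) && (c != 0)].
    by apply/setP => -[x c]; rewrite !inE memvf.
  by rewrite cardsX cardsT card_prod !card_ord card_vspace_nonzero dimL.
move: (card_imset_uniform_fibres card_fibres); rewrite card_params -/code [in RHS]mulnC -mulnA.
by move/eqP; rewrite eqn_pmul2l // => /eqP <-.
Qed.

Lemma code_cap_dim1_exists (j : 'I_q.-1) (l : 'I_e) :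
  exists W1 W2, [/\ in_code W1, in_code W2, W1 != W2 & \dim (W1 :&: W2) = 1%N].
Proof.
have [Keta _] := eta_unit j; set f := twist (eta j) gamma l.+1.
have f_neq0 u : u \in K -> u != 0 -> f u != 0.
  by move=> Ku; apply: contra => /eqP/(twist_eq0 deg_gamma Keta Ku (code_exponent_lt l))->.
have [w Kw w_notin1] : exists2 w, w \in K & w \notin 1%VS.
  by apply: dimv_notin_subv; rewrite dimv1 dimK.
have w_neq0 : w != 0 by apply: contraNneq w_notin1 => ->; rewrite mem0v.
have fw_neq0 := f_neq0 w Kw w_neq0; set a := f 1 / f w.
have a_neq0 : a != 0 by rewrite mulf_neq0 ?invr_eq0 ?f_neq0 ?mem1v ?oner_neq0.
have C1 : in_code (scalev 1 (codeV j l)) by exists j, l, 1; rewrite oner_neq0.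
have C2 : in_code (scalev a (codeV j l)) by exists j, l, a.
have f1_in_cap : f 1 \in (scalev 1 (codeV j l) :&: scalev a (codeV j l))%VS.
  rewrite memv_cap; apply/andP; split; apply/mem_scalev.
    by exists (f 1); rewrite ?mul1r //; apply/mem_Vsp; exists 1; rewrite ?mem1v.
  by exists (f w); rewrite ?divfK //; apply/mem_Vsp; exists w.
have neqC : scalev 1 (codeV j l) != scalev a (codeV j l).
  apply/eqP => EC; have dimI : (1 < \dim (scalev 1 (codeV j l) :&: scalev a (codeV j l)))%N.
    by rewrite -EC capvv (dim_in_code C1).
  have [_ _] := codeV_cap_gt1 (oner_neq0 L) a_neq0 dimI; rewrite div1r memvV => a1.
  have : f (a * w - 1) = 0 by rewrite /f raddfB /= twist_mul1v // -/f divfK // subrr.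
  have Kaw1 : a * w - 1 \in K by rewrite rpredB ?mem1v // rpredM // (subvP (sub1v K)).
  move/(twist_eq0 deg_gamma Keta Kaw1 (code_exponent_lt l))/eqP; rewrite subr_eq0.
  by move/eqP=> aw1; case/negP: w_notin1; rewrite -(mulKf a_neq0 w) aw1 mulr1 memvV.
exists (scalev 1 (codeV j l)), (scalev a (codeV j l)); split=> //.
apply/eqP; rewrite eqn_leq dim_code_cap // lt0n dimv_eq0.
by apply: contraTneq f1_in_cap => ->; rewrite memv0 f_neq0 ?mem1v ?oner_neq0.
Qed.

End CyclicCode.

Theorem lemma3p3 (F0 : finFieldType) (L : fieldExtType F0) (q k r : nat)
  (K : {subfield L}) (xi gamma : L) (eta : 'I_q.-1 -> L) :
  #|F0| = q ->
  (2 <= k)%N -> (2 < r)%N ->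
  \dim (fullv : {vspace L}) = (r * k)%N ->
  \dim K = k ->
  xi \in K -> (q ^ k - 1)%N.-primitive_root xi ->
  (exists p : {poly L}, [/\ irreducible_over K p, size p = r.+1 & root p gamma]) ->
  (forall j, eta j \in K /\ eta j != 0) ->
  (forall j j', j != j' -> forall m : nat, eta j != eta j' * xi ^+ (q.-1 * m)) ->
  let e := ((r + 1) %/ 2).-1 in
  let V := fun (j : 'I_q.-1) (l : 'I_e) => Vsp K q (eta j) gamma l.+1 in
  let inC := fun W : {vspace L} =>
    exists (j : 'I_q.-1) (l : 'I_e) (a : L), a != 0 /\ W = scalev a (V j l) in
  [/\ (forall j l x, x \in V j l <-> exists2 u, u \in K & x = u + eta j * u ^+ q * gamma ^+ l.+1),
      (forall W a, inC W -> a != 0 -> inC (scalev a W)),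
      (forall W, inC W -> \dim W = k),
      (exists s : seq {vspace L},
          [/\ uniq s, (forall W, W \in s <-> inC W) & size s = (e * (q ^ (r * k) - 1))%N]) &
      (exists W1 W2, [/\ inC W1, inC W2, W1 != W2 & subspace_dist W1 W2 = (2 * k - 2)%N]) /\
      (forall W1 W2, inC W1 -> inC W2 -> W1 != W2 -> (2 * k - 2 <= subspace_dist W1 W2)%N)].
Proof.
move=> qE k_gt1 r_gt2 dimL dimK _ xi_prim [p [p_irr p_size p_gamma]] eta_unit eta_cosets e V inC.
subst q; have deg_gamma : adjoin_degree K gamma = r.
  by rewrite (adjoin_degree_irreducible p_irr p_gamma) p_size.
have dimC := dim_in_code dimK deg_gamma eta_unit.
split.
- by move=> j l x; apply: iff_sym; apply: rwP; apply: mem_Vsp.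
- exact: in_code_scalev.
- exact: dimC.
- exists (enum (code r K gamma eta)); split=> [|W|]; first exact: enum_uniq.
    by rewrite mem_enum; apply: iff_sym; apply: in_codeP.
  by rewrite -cardE (card_code k_gt1 dimK xi_prim deg_gamma eta_unit eta_cosets dimL).
- split=> [|W1 W2 C1 C2 W12]; last first.
    apply: subspace_dist_ge (dimC _ C1) (dimC _ C2) _.
    by have := dim_code_cap dimK xi_prim deg_gamma eta_unit eta_cosets C1 C2 W12.
  have j0 : 'I_#|F0|.-1 by exists 0%N; rewrite -subn1 subn_gt0 finNzRing_gt1.
  have l0 : 'I_e by exists 0%N; rewrite /e; lia.
  have [W1 [W2 [C1 C2 W12 dimW12]]] :=
    code_cap_dim1_exists k_gt1 dimK xi_prim deg_gamma eta_unit eta_cosets j0 l0.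
  by exists W1, W2; split=> //; apply: subspace_dist_cap1 (dimC _ C1) (dimC _ C2) dimW12.
Qed.
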